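(* Let $\mathcal X$ be a finite set, let $Q\in\mathbb R^{\mathcal X\times\mathcal X}$ be an irreducible generator matrix (off-diagonal entries nonnegative, rows summing to zero) with invariant probability vector $\pi$ having all entries strictly positive ($Q^{\mathsf T}\pi=0$, $\sum_x\pi_x=1$), and define $A\in\mathbb R^{\mathcal X\times\mathcal X}$ by $A_{xy}:=Q_{yx}\sqrt{\pi_y/\pi_x}-Q_{xy}\sqrt{\pi_x/\pi_y}$. Define $\tilde{\mathcal E}:\mathbb R^{\mathcal X}\to\mathbb R$ and $\tilde{\mathbb J}:\mathbb R^{\mathcal X}\to\mathbb R^{\mathcal X\times\mathcal X}$ by $$\tilde{\mathcal E}(\omega):=1-\sqrt\pi\cdot\omega,\qquad \tilde{\mathbb J}(\omega):=\tfrac12\big(\sqrt\pi\otimes(A\omega)-(A\omega)\otimes\sqrt\pi\big).$$ Then the ODE $\dot\omega=\frac12A\omega$ admits the Hamiltonian structure $(\mathbb R^{\mathcal X},\tilde{\mathcal E},\tilde{\mathbb J})$: $\tilde{\mathbb J}(\omega)$ is skew-symmetric for every $\omega$, the bracket $\{\mathcal G_1,\mathcal G_2\}(\omega):=\langle D\mathcal G_1(\omega),\tilde{\mathbb J}(\omega)D\mathcal G_2(\omega)\rangle$ satisfies the Jacobi identity, and $\frac12A\omega=\tilde{\mathbb J}(\omega)D\tilde{\mathcal E}(\omega)$ for all $\omega\in\mathbb R^{\mathcal X}$.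
   Context: $\sqrt\pi$ denotes the entrywise square root, $v\cdot w$ and $\langle v,w\rangle$ the Euclidean inner product, $D$ the gradient, and $a\otimes b$ the outer product, i.e. the matrix with $(a\otimes b)v=\langle b,v\rangle a$. The ODE $\dot\omega=\frac12A\omega$ arises from $\dot\rho_x=\sum_{y\ne x}A_{xy}\sqrt{\rho_x\rho_y}$ via $\omega_x=\sqrt{\rho_x}$. *)

From HB Require Import structures.
From mathcomp Require Import all_boot all_order all_algebra.
From mathcomp Require Import all_classical all_reals all_analysis.
Set Implicit Arguments. Unset Strict Implicit. Unset Printing Implicit Defensive.
Import Order.TTheory GRing.Theory Num.Theory.
Import numFieldNormedType.Exports.
Local Open Scope ring_scope.

(* The finite state space X is 'I_n; vectors in R^X are row vectors 'rV[R]_n,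
   with entry x of w written w ord0 x. *)

Section Defs.
Variables (R : realType) (n : nat).

Definition generator (Q : 'M[R]_n) : Prop :=
  (forall x y : 'I_n, x != y -> 0 <= Q x y) /\
  (forall x : 'I_n, \sum_(y < n) Q x y = 0).

Definition irreducible_gen (Q : 'M[R]_n) : Prop :=
  forall x y : 'I_n, connect (fun a b : 'I_n => (a != b) && (0 < Q a b)) x y.

Definition invariant_prob (Q : 'M[R]_n) (pi : 'I_n -> R) : Prop :=
  (forall x, 0 < pi x) /\ (\sum_(x < n) pi x = 1) /\
  (forall y : 'I_n, \sum_(x < n) Q x y * pi x = 0).

Definition sqrtpi (pi : 'I_n -> R) : 'rV[R]_n := \row_x Num.sqrt (pi x).

Definition Amat (Q : 'M[R]_n) (pi : 'I_n -> R) : 'M[R]_n :=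
  \matrix_(x, y) (Q y x * Num.sqrt (pi y / pi x) - Q x y * Num.sqrt (pi x / pi y)).

Definition Aapp (A : 'M[R]_n) (w : 'rV[R]_n) : 'rV[R]_n :=
  \row_x \sum_(y < n) A x y * w ord0 y.

Definition Etil (pi : 'I_n -> R) (w : 'rV[R]_n) : R :=
  1 - \sum_(x < n) (sqrtpi pi) ord0 x * w ord0 x.

Definition Jtil (Q : 'M[R]_n) (pi : 'I_n -> R) (w : 'rV[R]_n) : 'M[R]_n :=
  \matrix_(x, y) (2^-1 * ((sqrtpi pi) ord0 x * (Aapp (Amat Q pi) w) ord0 y
                         - (Aapp (Amat Q pi) w) ord0 x * (sqrtpi pi) ord0 y)).

Definition ebasis (i : 'I_n) : 'rV[R]_n := delta_mx ord0 i.

Definition grad (G : 'rV[R]_n -> R) (w : 'rV[R]_n) : 'rV[R]_n :=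
  \row_i 'D_(ebasis i) G w.

Definition C2 (G : 'rV[R]_n -> R) : Prop :=
  (forall w, differentiable G w) /\
  (forall (i : 'I_n) w, differentiable ('D_(ebasis i) G) w) /\
  (forall (i j : 'I_n), continuous ('D_(ebasis j) ('D_(ebasis i) G))).

Definition bracket (J : 'rV[R]_n -> 'M[R]_n) (G1 G2 : 'rV[R]_n -> R)
    : 'rV[R]_n -> R :=
  fun w => \sum_(x < n) \sum_(y < n)
             (grad G1 w) ord0 x * J w x y * (grad G2 w) ord0 y.

End Defs.

From HB Require Import structures.
From mathcomp Require Import all_boot all_order all_algebra.
From mathcomp Require Import all_classical all_reals all_analysis.
From mathcomp Require Import ring.
Import Order.TTheory GRing.Theory Num.Theory.
Import numFieldNormedType.Exports.
Local Open Scope ring_scope.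
Set Implicit Arguments. Unset Strict Implicit.

(* With s := sqrt pi and a(w) := A w, the matrix tilde J(w) is the half wedge of s and a(w), so
   {G, F} = 1/2 (X_s G * X_a F - X_a G * X_s F), where X_s and X_a differentiate along the
   constant field s and the linear field w |-> A w.  Zero row sums of Q and invariance of pi
   give A s = 0; with the symmetry of second derivatives (Schwarz, from the mean value theorem
   applied to a second difference) this makes X_s and X_a commute, and the Jacobi identity for
   the bracket of two commuting derivations is a ring identity.  Finally s . s = sum pi = 1 and
   s . A w = 0 give tilde J(w) D tilde E(w) = - tilde J(w) s = A w / 2. *)

Section Schwarz.
Variables (R : realType) (V : normedModType R).
Implicit Types (f : V -> R) (u v w : V).

Lemma is_derive_along_line f u c t : derivable f (t *: u + c) u ->
  is_derive t 1 (fun t => f (t *: u + c)) ('D_u f (t *: u + c)).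
Proof.
move=> fu.
have quotE : (fun h : R => h^-1 *: (((fun t => f (t *: u + c)) \o shift t) (h *: 1)
                                     - f (t *: u + c)))
           = (fun h => h^-1 *: ((f \o shift (t *: u + c)) (h *: u) - f (t *: u + c))).
  by apply: funext => h /=; rewrite scalerDl addrA [h *: 1]mulr1.
by split; rewrite /derivable /derive quotE.
Qed.

Definition second_difference f u v w (h : R) :=
  f (h *: u + (h *: v + w)) - f (h *: u + w) - f (h *: v + w) + f w.

Lemma second_differenceC f u v w :
  second_difference f u v w = second_difference f v u w.
Proof.
by apply: funext => h; rewrite /second_difference addrCA (addrAC (f _) (- f _)).
Qed.

Section SecondDifference.
Variables (f : V -> R) (u v : V).
Hypotheses (df : forall x, differentiable f x)
           (dfu : forall x, differentiable ('D_u f) x).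

Lemma second_difference_mvt w h : 0 < h ->
  exists2 p, `|w - p| <= h * (`|u| + `|v|) &
    second_difference f u v w h = h * h * 'D_v ('D_u f) p.
Proof.
move=> h0.
pose phi t := f (t *: u + (h *: v + w)) - f (t *: u + w).
have dphi (t : R) : is_derive t (1 : R) phi
    ('D_u f (t *: u + (h *: v + w)) - 'D_u f (t *: u + w)).
  by apply: is_deriveB; apply: is_derive_along_line; exact: diff_derivable.
have [s s0h phiE] : exists2 s, s \in `]0, h[ &
    phi h - phi 0 = ('D_u f (s *: u + (h *: v + w)) - 'D_u f (s *: u + w)) * (h - 0).
  apply: MVT h0 (fun t _ => dphi t) _.
  by apply: derivable_within_continuous => t _; have [] := dphi t.
pose psi t := 'D_u f (t *: v + (s *: u + w)).
have dpsi (t : R) : is_derive t (1 : R) psi ('D_v ('D_u f) (t *: v + (s *: u + w))).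
  by apply: is_derive_along_line; exact: diff_derivable.
have [r r0h psiE] : exists2 r, r \in `]0, h[ &
    psi h - psi 0 = 'D_v ('D_u f) (r *: v + (s *: u + w)) * (h - 0).
  apply: MVT h0 (fun t _ => dpsi t) _.
  by apply: derivable_within_continuous => t _; have [] := dpsi t.
exists (r *: v + (s *: u + w)).
  move: s0h r0h; rewrite !in_itv /= => /andP[s0 sh] /andP[r0 rh].
  rewrite addrA opprD addrCA subrr addr0 normrN (le_trans (ler_normD _ _)) //.
  rewrite !normrZ !gtr0_norm // mulrDr addrC.
  by rewrite lerD // ler_wpM2r // ltW.
have -> : second_difference f u v w h = phi h - phi 0.
  by rewrite /phi /second_difference !scale0r !add0r; ring.
have psi_diffE : 'D_u f (s *: u + (h *: v + w)) - 'D_u f (s *: u + w) = psi h - psi 0.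
  by rewrite /psi scale0r add0r addrCA.
by rewrite phiE psi_diffE psiE !subr0 -mulrA mulrC.
Qed.

Lemma second_difference_cvg w : {for w, continuous ('D_v ('D_u f))} ->
  ((fun h => second_difference f u v w h / (h * h)) @ 0^'+ --> 'D_v ('D_u f) w)%classic.
Proof.
move=> cw; apply/cvgrPdist_lt => e e0.
have /nbhs_ballP[d d0 near_w] :
    \forall p \near w, `|'D_v ('D_u f) w - 'D_v ('D_u f) p| < e.
  exact: cvgr_dist_lt.
have uv1_gt0 : 0 < `|u| + `|v| + 1 by rewrite ltr_pwDr // addr_ge0.
near=> h.
have h0 : 0 < h by near: h; exact: nbhs_right_gt.
have [p wp ->] := second_difference_mvt w h0.
rewrite mulrC mulKf ?mulf_neq0 ?gt_eqF //.
apply: near_w; rewrite -ball_normE /= (le_lt_trans wp) //.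
rewrite (@le_lt_trans _ _ (h * (`|u| + `|v| + 1))) ?ler_wpM2l ?lerDl ?ltW //.
rewrite -ltr_pdivlMr //; near: h; exact: nbhs_right_lt (divr_gt0 d0 uv1_gt0).
Unshelve. all: by end_near.
Qed.
End SecondDifference.

Lemma derive_comm f u v w :
  (forall x, differentiable f x) -> (forall x, differentiable ('D_u f) x) ->
  (forall x, differentiable ('D_v f) x) ->
  {for w, continuous ('D_v ('D_u f))} -> {for w, continuous ('D_u ('D_v f))} ->
  'D_v ('D_u f) w = 'D_u ('D_v f) w.
Proof.
move=> df dfu dfv cuv cvu.
have := second_difference_cvg df dfv cvu; rewrite -second_differenceC.
exact: cvg_unique (second_difference_cvg df dfu cuv).
Qed.
End Schwarz.

Section HalfWedge.
Variables (R : comUnitRingType) (n : nat).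
Implicit Types (g h u v : 'rV[R]_n).

Definition dotv u v : R := \sum_(i < n) u ord0 i * v ord0 i.

Definition half_wedge u v : 'M[R]_n :=
  \matrix_(x, y) (2^-1 * (u ord0 x * v ord0 y - v ord0 x * u ord0 y)).

Lemma trmx_half_wedge u v : (half_wedge u v)^T = - half_wedge u v.
Proof. by apply/matrixP => x y; rewrite !mxE; ring. Qed.

Lemma half_wedge_mulv u v h x :
  \sum_(y < n) half_wedge u v x y * h ord0 y
  = 2^-1 * (u ord0 x * dotv h v - v ord0 x * dotv h u).
Proof.
rewrite /dotv !mulr_sumr -sumrB mulr_sumr.
by apply: eq_bigr => y _; rewrite mxE; ring.
Qed.

Lemma half_wedge_form g u v h :
  \sum_(x < n) \sum_(y < n) g ord0 x * half_wedge u v x y * h ord0 y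
  = 2^-1 * (dotv g u * dotv h v - dotv g v * dotv h u).
Proof.
under eq_bigr do under eq_bigr do rewrite -mulrA.
under eq_bigr do rewrite -mulr_sumr half_wedge_mulv.
set a := dotv h v; set b := dotv h u.
rewrite /dotv !mulr_suml -sumrB mulr_sumr.
by apply: eq_bigr => x _; ring.
Qed.

Lemma half_wedge_contract_unit u v x : dotv u u = 1 -> dotv u v = 0 ->
  \sum_(y < n) half_wedge u v x y * (- u) ord0 y = 2^-1 * v ord0 x.
Proof.
move=> uu1 uv0; under eq_bigr do rewrite [in X in _ * X]mxE mulrN.
by rewrite sumrN half_wedge_mulv uu1 uv0 mulr0 mulr1 sub0r mulrN opprK.
Qed.

End HalfWedge.

Section LieDerivative.
Variables (R : realType) (n : nat).
Local Notation e := (ebasis R).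
Implicit Types (F G : 'rV[R]_n -> R) (S T : 'rV[R]_n -> 'rV[R]_n) (c v w : 'rV[R]_n).

Lemma dotv_ebasis c k : dotv c (e k) = c ord0 k.
Proof.
rewrite /dotv (bigD1 k) //= big1 => [|x xk]; rewrite mxE eqxx /=.
  by rewrite eqxx mulr1 addr0.
by rewrite (negPf xk) mulr0.
Qed.

Lemma is_derive_dotv c w v : is_derive w v (dotv c) (dotv c v).
Proof.
have quot_cvg : ((fun h => h^-1 *: ((dotv c \o shift w) (h *: v) - dotv c w))
                  @ 0^' --> dotv c v)%classic.
  apply: cvg_near_cst; near=> h.
  have h0 : h != 0 by near: h; exact: nbhs_dnbhs_neq.
  rewrite /= /dotv -sumrB scaler_sumr; apply: eq_bigr => i _.
  by rewrite !mxE /GRing.scale /= -mulrBr addrK mulrCA mulKf.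
by split; [apply/cvgP: quot_cvg | apply/cvg_lim: quot_cvg].
Unshelve. all: by end_near.
Qed.

(* Locked so that rewriting never unfolds [lie S F w] into its defining sum. *)
Fact lie_key : unit. Proof. by []. Qed.
Definition lie S F w : R := locked_with lie_key (dotv (grad F w) (S w)).

Lemma lie_dotv S F w : lie S F w = dotv (grad F w) (S w).
Proof. exact: unlock. Qed.

Lemma lieE S F w : lie S F w = \sum_(x < n) 'D_(e x) F w * S w ord0 x.
Proof. by rewrite lie_dotv; apply: eq_bigr => x _; rewrite mxE. Qed.

Lemma lie_sum S F :
  lie S F = \sum_(x < n) ('D_(e x) F * (fun w => S w ord0 x)).
Proof. by apply: funext => w; rewrite fct_sumE lieE. Qed.

Lemma derivable_lie S F w v :
  (forall x, derivable ('D_(e x) F) w v) ->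
  (forall x, derivable (fun w => S w ord0 x) w v) ->
  derivable (lie S F) w v.
Proof.
by move=> dF dS; rewrite lie_sum; apply: derivable_sum => x; exact: derivableM.
Qed.

Lemma lie_lie S T F w :
  (forall x k, derivable ('D_(e x) F) w (e k)) ->
  (forall x k, derivable (fun w => T w ord0 x) w (e k)) ->
  lie S (lie T F) w =
    \sum_(k < n) \sum_(x < n) S w ord0 k * T w ord0 x * 'D_(e k) ('D_(e x) F) w
  + \sum_(x < n) 'D_(e x) F w * lie S (fun w => T w ord0 x) w.
Proof.
move=> dF dT.
have -> : lie S (lie T F) w = \sum_(k < n) S w ord0 k *
    \sum_(x < n) ('D_(e x) F w * 'D_(e k) (fun w => T w ord0 x) w
                 + T w ord0 x * 'D_(e k) ('D_(e x) F) w).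
  rewrite lieE; apply: eq_bigr => k _; rewrite mulrC lie_sum derive_sum => [|x]; last first.
    exact: derivableM.
  by congr (_ * _); apply: eq_bigr => x _; rewrite deriveM.
under eq_bigr do rewrite big_split mulrDr.
rewrite big_split [RHS]addrC /=; congr (_ + _).
  under eq_bigr do rewrite mulr_sumr.
  rewrite exchange_big; apply: eq_bigr => x _; rewrite lieE mulr_sumr.
  by apply: eq_bigr => k _; ring.
by apply: eq_bigr => k _; rewrite mulr_sumr; apply: eq_bigr => x _; ring.
Qed.

Lemma lie_commute S T F w :
  (forall x k, derivable ('D_(e x) F) w (e k)) ->
  (forall x k, derivable (fun w => S w ord0 x) w (e k)) ->
  (forall x k, derivable (fun w => T w ord0 x) w (e k)) ->
  (forall k x, 'D_(e k) ('D_(e x) F) w = 'D_(e x) ('D_(e k) F) w) ->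
  (forall x, lie S (fun w => T w ord0 x) w = lie T (fun w => S w ord0 x) w) ->
  lie S (lie T F) w = lie T (lie S F) w.
Proof.
move=> dF dS dT hessC ST; rewrite !lie_lie //; congr (_ + _).
  rewrite exchange_big; apply: eq_bigr => x _; apply: eq_bigr => k _.
  by rewrite hessC; ring.
by apply: eq_bigr => x _; rewrite ST.
Qed.

Lemma bracket_half_wedge S T G F w :
  bracket (fun w => half_wedge (S w) (T w)) G F w
  = 2^-1 * (lie S G w * lie T F w - lie T G w * lie S F w).
Proof. by rewrite !lie_dotv; exact: half_wedge_form. Qed.

Lemma derivable_lie_C2 S G w v : C2 G ->
  (forall x, derivable (fun w => S w ord0 x) w v) -> derivable (lie S G) w v.
Proof. by case=> _ [ddG _] dS; apply: derivable_lie => // x; exact: diff_derivable. Qed.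

End LieDerivative.

(* ring's reflexive check would evaluate these atoms, which is prohibitively slow. *)
Ltac abstract_at w := repeat match goal with
  | |- context [lie ?V ?G w] => move: (lie V G w) => ?
  | |- context ['D_?v ?G w] => move: ('D_v G w) => ?
  end.

Section JacobiHalfWedge.
Variables (R : realType) (n : nat) (S T : 'rV[R]_n -> 'rV[R]_n).
Hypotheses (dS : forall x w v, derivable (fun w => S w ord0 x) w v)
           (dT : forall x w v, derivable (fun w => T w ord0 x) w v)
           (ST : forall G w, C2 G -> lie S (lie T G) w = lie T (lie S G) w).
Local Notation e := (ebasis R).
Local Notation J := (fun w => half_wedge (S w) (T w)).
Implicit Types (V : 'rV[R]_n -> 'rV[R]_n) (F G : 'rV[R]_n -> R) (w : 'rV[R]_n).

Lemma lie_bracket_half_wedge V G F w : C2 G -> C2 F ->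
  lie V (bracket J G F) w
  = 2^-1 * (lie V (lie S G) w * lie T F w + lie S G w * lie V (lie T F) w
            - lie V (lie T G) w * lie S F w - lie T G w * lie V (lie S F) w).
Proof.
move=> cG cF.
have dSG (k : 'I_n) := derivable_lie_C2 cG (fun x => @dS x w (e k)).
have dTG (k : 'I_n) := derivable_lie_C2 cG (fun x => @dT x w (e k)).
have dSF (k : 'I_n) := derivable_lie_C2 cF (fun x => @dS x w (e k)).
have dTF (k : 'I_n) := derivable_lie_C2 cF (fun x => @dT x w (e k)).
have -> : bracket J G F = 2^-1 \*: (lie S G * lie T F - lie T G * lie S F).
  by apply: funext => w'; rewrite bracket_half_wedge.
have Dk k : 'D_(e k) (2^-1 \*: (lie S G * lie T F - lie T G * lie S F)) w
    = 2^-1 * (lie S G w * 'D_(e k) (lie T F) w + lie T F w * 'D_(e k) (lie S G) w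
       - (lie T G w * 'D_(e k) (lie S F) w + lie S F w * 'D_(e k) (lie T G) w)).
  exact: (@derive_val _ _ _ _ _ _ _ (is_deriveZ (2^-1)
    (is_deriveB (is_deriveM (derivableP (dSG k)) (derivableP (dTF k)))
                (is_deriveM (derivableP (dTG k)) (derivableP (dSF k)))))).
rewrite !(lieE V); under eq_bigr do rewrite Dk.
rewrite !mulr_suml !mulr_sumr -!big_split /= -!sumrB mulr_sumr.
by apply: eq_bigr => k _; abstract_at w; ring.
Qed.

Theorem jacobi_half_wedge G1 G2 G3 w : C2 G1 -> C2 G2 -> C2 G3 ->
  bracket J G1 (bracket J G2 G3) w + bracket J G2 (bracket J G3 G1) w
  + bracket J G3 (bracket J G1 G2) w = 0.
Proof.
move=> c1 c2 c3.
rewrite !(bracket_half_wedge S T) !lie_bracket_half_wedge // !ST //.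
by abstract_at w; ring.
Qed.

End JacobiHalfWedge.

Section ConstantAndLinearFields.
Variables (R : realType) (n : nat) (s : 'rV[R]_n) (A : 'M[R]_n).
Local Notation e := (ebasis R).
Implicit Types (S : 'rV[R]_n -> 'rV[R]_n) (G : 'rV[R]_n -> R) (v w : 'rV[R]_n).

Lemma Aapp_dotv w x : Aapp A w ord0 x = dotv (row x A) w.
Proof. by rewrite mxE; apply: eq_bigr => y _; rewrite mxE. Qed.

Lemma is_derive_Aapp w v x :
  is_derive w v (fun w => Aapp A w ord0 x) (Aapp A v ord0 x).
Proof.
have -> : (fun w => Aapp A w ord0 x) = dotv (row x A).
  by apply: funext => w'; rewrite Aapp_dotv.
by rewrite Aapp_dotv; exact: is_derive_dotv.
Qed.

Lemma derivable_cst_coord x w v : derivable (fun w => cst s w ord0 x) w v.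
Proof. exact: derivable_cst. Qed.

Lemma derivable_Aapp_coord x w v : derivable (fun w => Aapp A w ord0 x) w v.
Proof. by have [] := is_derive_Aapp w v x. Qed.

Lemma lie_cst S (c : R) w : lie S (cst c) w = 0.
Proof. by rewrite lieE big1 // => k _; rewrite derive_cst mul0r. Qed.

Lemma lie_Aapp_coord S w x : lie S (fun w => Aapp A w ord0 x) w = Aapp A (S w) ord0 x.
Proof.
rewrite lieE [RHS]mxE; apply: eq_bigr => k _.
by rewrite (@derive_val _ _ _ _ _ _ _ (is_derive_Aapp w _ x)) Aapp_dotv dotv_ebasis mxE.
Qed.

Lemma lie_commute_cst_Aapp G w : Aapp A s = 0 -> C2 G ->
  lie (cst s) (lie (Aapp A) G) w = lie (Aapp A) (lie (cst s) G) w.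
Proof.
move=> As0 [dG [ddG cG]]; apply: lie_commute => [x k|x k|x k|k x|x].
- exact: diff_derivable.
- exact: derivable_cst_coord.
- exact: derivable_Aapp_coord.
- exact: derive_comm dG (ddG x) (ddG k) (cG x k w) (cG k x w).
change (lie (cst s) (fun w => Aapp A w ord0 x) w = lie (Aapp A) (cst (s ord0 x)) w).
by rewrite lie_Aapp_coord lie_cst As0 mxE.
Qed.

End ConstantAndLinearFields.

Section InvariantMeasure.
Variables (R : realType) (n : nat) (Q : 'M[R]_n) (pi : 'I_n -> R).
Hypotheses (hQ : generator Q) (hpi : invariant_prob Q pi).
Local Notation r x := (sqrtpi pi ord0 x).

Lemma sqrtpi_neq0 x : r x != 0.
Proof. by rewrite mxE gt_eqF // sqrtr_gt0; case: hpi. Qed.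

Lemma sqrtpi_sqr x : r x * r x = pi x.
Proof. by rewrite mxE -expr2 sqr_sqrtr // ltW //; case: hpi. Qed.

Lemma Amat_sqrtpi x y : Amat Q pi x y = Q y x * (r y / r x) - Q x y * (r x / r y).
Proof.
have pi_ge0 z : 0 <= pi z by apply: ltW; case: hpi.
by rewrite !mxE !sqrtrM ?sqrtrV.
Qed.

Lemma dotv_sqrtpi : dotv (sqrtpi pi) (sqrtpi pi) = 1.
Proof. by case: hpi => _ [<- _]; apply: eq_bigr => x _; rewrite sqrtpi_sqr. Qed.

Lemma Aapp_Amat_sqrtpi : Aapp (Amat Q pi) (sqrtpi pi) = 0.
Proof.
apply/rowP => x; rewrite !mxE.
transitivity ((\sum_(y < n) Q y x * pi y) / r x - (\sum_(y < n) Q x y) * r x).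
  rewrite !mulr_suml -sumrB; apply: eq_bigr => y _.
  rewrite Amat_sqrtpi -sqrtpi_sqr; field.
  by rewrite !sqrtpi_neq0.
by case: hpi => _ [_ ->]; case: hQ => _ ->; rewrite mul0r mul0r subrr.
Qed.

Lemma sqrtpi_mul_Amat y : \sum_(x < n) r x * Amat Q pi x y = 0.
Proof.
transitivity ((\sum_(x < n) Q y x) * r y - (\sum_(x < n) Q x y * pi x) / r y).
  rewrite !mulr_suml -sumrB; apply: eq_bigr => x _.
  rewrite Amat_sqrtpi -sqrtpi_sqr; field.
  by rewrite !sqrtpi_neq0.
by case: hpi => _ [_ ->]; case: hQ => _ ->; rewrite mul0r mul0r subrr.
Qed.

Lemma dotv_sqrtpi_Aapp w : dotv (sqrtpi pi) (Aapp (Amat Q pi) w) = 0.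
Proof.
rewrite /dotv; under eq_bigr do rewrite [Aapp _ _ _ _]mxE mulr_sumr.
rewrite exchange_big big1 // => y _.
transitivity (w ord0 y * \sum_(x < n) r x * Amat Q pi x y).
  by rewrite mulr_sumr; apply: eq_bigr => x _; ring.
by rewrite sqrtpi_mul_Amat mulr0.
Qed.

End InvariantMeasure.

Lemma grad_Etil (R : realType) n (pi : 'I_n -> R) w : grad (Etil pi) w = - sqrtpi pi.
Proof.
apply/rowP => k; rewrite [LHS]mxE [RHS]mxE.
have -> : Etil pi = cst 1 - dotv (sqrtpi pi) by [].
by rewrite (@derive_val _ _ _ _ _ _ _
  (is_deriveB (is_derive_cst (1 : R) w _) (is_derive_dotv _ w _))) sub0r dotv_ebasis.
Qed.

Theorem proposition4p1 (R : realType) (n : nat) (Q : 'M[R]_n) (pi : 'I_n -> R)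
  (hQ : generator Q) (hirr : irreducible_gen Q) (hpi : invariant_prob Q pi) :
  (* skew-symmetry of tilde J(w) *)
  (forall w : 'rV[R]_n, (Jtil Q pi w)^T = - Jtil Q pi w) /\
  (* Jacobi identity of the bracket *)
  (forall G1 G2 G3 : 'rV[R]_n -> R, C2 G1 -> C2 G2 -> C2 G3 ->
     forall w : 'rV[R]_n,
       bracket (Jtil Q pi) G1 (bracket (Jtil Q pi) G2 G3) w
     + bracket (Jtil Q pi) G2 (bracket (Jtil Q pi) G3 G1) w
     + bracket (Jtil Q pi) G3 (bracket (Jtil Q pi) G1 G2) w = 0) /\
  (* 1/2 A w = tilde J(w) D tilde E(w) *)
  (forall (w : 'rV[R]_n) (x : 'I_n),
     2^-1 * (Aapp (Amat Q pi) w) ord0 x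
     = \sum_(y < n) Jtil Q pi w x y * (grad (Etil pi) w) ord0 y).
Proof.
split; [|split].
- move=> w; exact: trmx_half_wedge.
- move=> G1 G2 G3 c1 c2 c3 w.
  apply: (@jacobi_half_wedge _ _ (cst (sqrtpi pi)) (Aapp (Amat Q pi))) => //.
  + exact: derivable_cst_coord.
  + exact: derivable_Aapp_coord.
  + by move=> G w' cG; apply: lie_commute_cst_Aapp (Aapp_Amat_sqrtpi hQ hpi) cG.
- move=> w x; rewrite grad_Etil.
  by rewrite (half_wedge_contract_unit x (dotv_sqrtpi hpi) (dotv_sqrtpi_Aapp hQ hpi w)).
Qed.
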